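(* Let $q,n$ be positive integers. For every $j\in\{0,1,\dots,q-1\}$, the code $$\mathcal C_q^{(j)}(n;q-1)=\Big\{\mathbf x\in[q]^n:\ \sum_{i=1}^n x_i\equiv j\pmod{q}\Big\}$$ is an optimal $(\cdot,1,\cdot)$-AED code in $[q]^n$ (it is $(\cdot,1,\cdot)$-AED and has maximum cardinality among such codes), and $|\mathcal C_q^{(j)}(n;q-1)|=q^{n-1}$.
   Context: $[q]=\{0,1,\dots,q-1\}$. Channel over $[q]$ with $(\cdot,1,\cdot)$-asymmetric errors (a single asymmetric error of arbitrary magnitude): an input $\mathbf x\in[q]^n$ can produce any output $\mathbf y\in[q]^n$ with $y_i\ge x_i$ for all $i$ and $y_i\ne x_i$ for at most one index $i$. $\mathrm{Out}(\mathbf x)$ denotes the set of all such outputs. A code $\mathcal C\subseteq[q]^n$ is $(\cdot,1,\cdot)$-AED if for all $\mathbf x\in\mathcal C$ and $\mathbf y\in\mathrm{Out}(\mathbf x)$ with $\mathbf y\ne\mathbf x$, we have $\mathbf y\notin\mathcal C$. *)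

From mathcomp Require Import all_boot.
Set Implicit Arguments. Unset Strict Implicit. Unset Printing Implicit Defensive.

Definition word (q n : nat) := {ffun 'I_n -> 'I_q}.

(* y is an output of x under a single asymmetric error of arbitrary magnitude
   (or no error): y_i >= x_i for all i and y_i <> x_i for at most one i. *)
Definition is_out (q n : nat) (x y : word q n) : bool :=
  [forall i, (x i <= y i)%N] && (#|[set i | x i != y i]| <= 1)%N.

Definition Out (q n : nat) (x : word q n) : {set word q n} :=
  [set y | is_out x y].

Definition is_AED (q n : nat) (C : {set word q n}) : Prop :=
  forall x y : word q n, x \in C -> y \in Out x -> y != x -> y \notin C.

Definition optimal_AED (q n : nat) (C : {set word q n}) : Prop :=
  is_AED C /\ forall D : {set word q n}, is_AED D -> (#|D| <= #|C|)%N.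

Definition sum_code (q n : nat) (j : nat) : {set word q n} :=
  [set x : word q n | (\sum_(i < n) (x i : nat)) %% q == j %% q].

From mathcomp Require Import all_boot.
Set Implicit Arguments. Unset Strict Implicit.

(* Two distinct codewords with the same tail are comparable, so one is an
   output of the other: an AED code is injective under dropping the first
   letter, whence |C| <= q^(n-1).  In the sum code the first letter is
   determined by the tail, so this bound is attained; and a single upward
   error changes the letter sum by an amount in (0, q), which is never a
   multiple of q, so the sum code is AED. *)

Section Tails.
Variables (q m : nat).

Definition tail_word (x : word q m.+1) : word q m := [ffun k => x (lift ord0 k)].

Definition cons_word (a : 'I_q) (z : word q m) : word q m.+1 :=
  [ffun i => if unlift ord0 i is Some k then z k else a].

Lemma tail_cons_word a z : tail_word (cons_word a z) = z.
Proof. by apply/ffunP => k; rewrite !ffunE liftK. Qed.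

Lemma sum_cons_word a z :
  \sum_(i < m.+1) (cons_word a z i : nat) = a + \sum_(k < m) (z k : nat).
Proof.
rewrite big_ord_recl ffunE unlift_none; congr (_ + _).
by apply: eq_bigr => k _; rewrite ffunE liftK.
Qed.

Lemma out_of_eq_tail (x y : word q m.+1) :
  tail_word x = tail_word y -> x ord0 <= y ord0 -> y \in Out x.
Proof.
move=> eq_tail le0.
have eq_lift k : x (lift ord0 k) = y (lift ord0 k).
  by have := congr1 (fun f : word q m => f k) eq_tail; rewrite !ffunE.
rewrite inE /is_out; apply/andP; split.
  by apply/forallP => i; case: (unliftP ord0 i) => [k ->|->] //; rewrite eq_lift.
rewrite -(cards1 (@ord0 m)); apply: subset_leq_card; apply/subsetP => i.
by rewrite !inE; case: (unliftP ord0 i) => [k ->|->] //; rewrite eq_lift eqxx.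
Qed.

Lemma AED_card_leq (D : {set word q m.+1}) : is_AED D -> #|D| <= q ^ m.
Proof.
move=> aedD.
have inj_tail : {in D &, injective tail_word}.
  move=> x y xD yD eq_tail.
  wlog le0 : x y xD yD eq_tail / x ord0 <= y ord0.
    by move=> sym; case: (leqP (x ord0) (y ord0)) => [|/ltnW] le;
       [|apply/esym]; apply: sym.
  apply/eqP; rewrite eq_sym; apply: contraTT yD => neq.
  exact: aedD xD (out_of_eq_tail eq_tail le0) neq.
rewrite -(card_in_imset inj_tail); apply: leq_trans (max_card _) _.
by rewrite card_ffun !card_ord.
Qed.

End Tails.

Lemma out_neq_single (q n : nat) (x y : word q n) :
  y \in Out x -> y != x -> exists i, x i < y i /\ forall k, k != i -> x k = y k.
Proof.
rewrite inE => /andP[/forallP le_xy card_diff] neq.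
have [i neq_i] : exists i, x i != y i.
  apply/existsP; apply: contraR neq; rewrite negb_exists => /forallP eq_xy.
  by apply/eqP/ffunP => k; have := eq_xy k; rewrite negbK => /eqP.
exists i; split; first by rewrite ltn_neqAle neq_i le_xy.
move=> k neq_k; apply/eqP; apply: contraR neq_k => neq_k.
by apply/eqP/(card_le1_eqP card_diff); rewrite inE.
Qed.

Lemma sum_code_AED (q n j : nat) : is_AED (sum_code q n j).
Proof.
move=> x y; rewrite [_ \in sum_code _ _ _]inE => /eqP sum_x out_xy neq.
have [i [lt_i eq_other]] := out_neq_single out_xy neq.
set rest := \sum_(k | k != i) (x k : nat).
have sum_y : \sum_k (y k : nat) = rest + y i.
  rewrite (bigD1 i) //= addnC; congr (_ + _).
  by apply: eq_bigr => k /eq_other ->.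
rewrite inE sum_y -sum_x (bigD1 i) //= [x i + _]addnC -/rest eqn_modDl.
by rewrite !modn_small ?ltn_ord // neq_ltn lt_i orbT.
Qed.

Lemma sum_code_tail_surj (q m j : nat) : 0 < q ->
  forall z : word q m, exists2 x, x \in sum_code q m.+1 j & tail_word x = z.
Proof.
move=> q_gt0 z; set s := \sum_(k < m) (z k : nat).
(* the letter (j - s) mod q, written to avoid truncated subtraction *)
pose a : 'I_q := Ordinal (ltn_pmod (j + (q - s %% q)) q_gt0).
exists (cons_word a z); last exact: tail_cons_word.
rewrite inE sum_cons_word /= -/s modnDml -addnA -modnDmr.
have -> : (q - s %% q + s) %% q = 0.
  by rewrite -modnDmr subnK ?modnn // ltnW // ltn_mod.
by rewrite addn0.
Qed.

Lemma card_sum_code (q m j : nat) : 0 < q -> #|sum_code q m.+1 j| = q ^ m.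
Proof.
move=> q_gt0; apply/eqP; rewrite eqn_leq AED_card_leq /=; last exact: sum_code_AED.
have -> : q ^ m = #|word q m| by rewrite card_ffun !card_ord.
apply: leq_trans (leq_imset_card (@tail_word q m) _).
apply: subset_leq_card; apply/subsetP => z _.
by have [x xC <-] := sum_code_tail_surj j q_gt0 z; apply: imset_f.
Qed.

Theorem corollary1 (q n : nat) (hq : (0 < q)%N) (hn : (0 < n)%N) (j : nat) (hj : (j < q)%N) :
  optimal_AED (sum_code q n j) /\ #|sum_code q n j| = (q ^ n.-1)%N.
Proof.
case: n hn => // m _ /=.
have card_C := card_sum_code m j hq.
split=> //; split; first exact: sum_code_AED.
by move=> D aedD; rewrite card_C; apply: AED_card_leq.
Qed.
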